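(* For all $a\in\mathbb{R}$ and $y>0$, $$\frac{\Gamma(a,y)}{\Gamma(a-1,y)}>y.$$
   Context: $\Gamma(a,y)=\int_y^{\infty} t^{a-1}e^{-t}\,dt$ is the upper incomplete gamma function, defined for all real $a$ when $y>0$. *)

From Stdlib Require Import Reals.
From Coquelicot Require Import Coquelicot.
Open Scope R_scope.

Definition upper_inc_gamma (a y : R) : R :=
  RInt_gen (fun t => Rpower t (a - 1) * exp (- t)) (at_point y) (Rbar_locally p_infty).

(* Writing d(t) = t^(a-1) e^(-t) - y t^(a-2) e^(-t) = (t - y) t^(a-2) e^(-t), which is
   positive on (y, +oo), gives Γ(a,y) - y Γ(a-1,y) = ∫_y^∞ d > 0, while Γ(a-1,y) > 0.
   Convergence of all three integrals comes from the bound t^c e^(-t) <= M e^(-t/2) and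
   the monotone convergence of the partial integrals of a nonnegative integrand. *)

From Stdlib Require Import Reals Lra Classical.
From Coquelicot Require Import Coquelicot.
Open Scope R_scope.

Lemma filterlim_p_infty_nondecreasing (F : R -> R) (y B : R) :
  (forall a b, y <= a <= b -> F a <= F b) -> (forall x, y <= x -> F x <= B) ->
  exists l, filterlim F (Rbar_locally p_infty) (locally l) /\
            forall x, y <= x -> F x <= l.
Proof.
  intros Fmono Fbound.
  destruct (completeness (fun r => exists x, y <= x /\ r = F x)) as [l [l_ub l_least]].
  { exists B; intros r [x [Hx ->]]; auto. }
  { exists (F y), y; split; [lra | reflexivity]. }
  assert (F_le_l : forall x, y <= x -> F x <= l) by (intros x Hx; apply l_ub; eauto).
  exists l; split; [| exact F_le_l].
  apply filterlim_locally; intros eps.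
  assert (close : exists x0, y <= x0 /\ l - eps < F x0).
  { apply NNPP; intros no_close.
    assert (l <= l - eps).
    { apply l_least; intros r [x [Hx ->]].
      apply Rnot_lt_le; intros Hlt; apply no_close; eauto. }
    destruct eps; simpl in *; lra. }
  destruct close as [x0 [Hx0 Hclose]].
  exists x0; intros b Hb.
  assert (F x0 <= F b) by (apply Fmono; lra).
  assert (F b <= l) by (apply F_le_l; lra).
  unfold ball; simpl; unfold AbsRing_ball, abs, minus, plus, opp; simpl.
  rewrite Rabs_left1 by lra; lra.
Qed.

Lemma is_RInt_gen_p_infty_lim (h : R -> R) (y l : R) :
  (forall b, y <= b -> ex_RInt h y b) ->
  filterlim (fun b => RInt h y b) (Rbar_locally p_infty) (locally l) ->
  is_RInt_gen h (at_point y) (Rbar_locally p_infty) l.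
Proof.
  intros hint hlim P HP.
  destruct (hlim P HP) as [N HN].
  apply (Filter_prod _ _ _ (fun a => a = y) (fun b => Rmax N y < b)).
  - reflexivity.
  - exists (Rmax N y); auto.
  - intros a b -> Hb.
    apply Rmax_Rlt in Hb as [HNb Hyb].
    exists (RInt h y b); split.
    + apply (@RInt_correct R_CompleteNormedModule), hint; lra.
    + apply HN; exact HNb.
Qed.

Lemma RInt_gen_p_infty_unique (h : R -> R) (y l : R) :
  is_RInt_gen h (at_point y) (Rbar_locally p_infty) l ->
  RInt_gen h (at_point y) (Rbar_locally p_infty) = l.
Proof.
  exact (@is_RInt_gen_unique R_CompleteNormedModule _ _
    (Proper_StrongProper _ (at_point_filter y))
    (Proper_StrongProper _ (Rbar_locally_filter p_infty)) h l).
Qed.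

Section ExpDominatedIntegral.

Variables (h : R -> R) (y M : R).
Hypothesis h_cont : forall t, y <= t -> continuous h t.
Hypothesis h_ge0 : forall t, y <= t -> 0 <= h t.
Hypothesis h_le_exp : forall t, y <= t -> h t <= M * exp (- t / 2).

Lemma ex_RInt_dominated (a b : R) : y <= a <= b -> ex_RInt h a b.
Proof.
  intros Hab; apply (@ex_RInt_continuous R_CompleteNormedModule).
  intros z Hz; apply h_cont.
  rewrite Rmin_left in Hz by lra; lra.
Qed.

Lemma RInt_dominated_nondecreasing (a b : R) :
  y <= a <= b -> RInt h y a <= RInt h y b.
Proof.
  intros Hab.
  rewrite <- (RInt_Chasles h y a b) by (apply ex_RInt_dominated; lra).
  assert (0 <= RInt h a b).
  { apply RInt_ge_0; [lra | apply ex_RInt_dominated; lra |].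
    intros; apply h_ge0; lra. }
  unfold plus; simpl; lra.
Qed.

Lemma RInt_dominated_le (x : R) : y <= x -> RInt h y x <= 2 * M * exp (- y / 2).
Proof.
  intros Hx.
  assert (M_ge0 : 0 <= M).
  { pose proof (h_ge0 y (Rle_refl _)); pose proof (h_le_exp y (Rle_refl _)).
    pose proof (exp_pos (- y / 2)); nra. }
  assert (Hexp : is_RInt (fun t => M * exp (- t / 2)) y x
    (minus ((fun t => -2 * M * exp (- t / 2)) x) ((fun t => -2 * M * exp (- t / 2)) y))).
  { apply (@is_RInt_derive R_CompleteNormedModule (fun t => -2 * M * exp (- t / 2))).
    - intros z _; auto_derive; [auto | unfold Rdiv; field].
    - intros z _; apply (ex_derive_continuous (fun t => M * exp (- t / 2))).
      auto_derive; auto. }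
  apply Rle_trans with (RInt (fun t => M * exp (- t / 2)) y x).
  - apply RInt_le; [lra | apply ex_RInt_dominated; lra | eexists; exact Hexp |].
    intros; apply h_le_exp; lra.
  - rewrite (is_RInt_unique _ _ _ _ Hexp); unfold minus, plus, opp; simpl.
    pose proof (exp_pos (- x / 2)); nra.
Qed.

Lemma is_RInt_gen_dominated :
  exists l, is_RInt_gen h (at_point y) (Rbar_locally p_infty) l /\
            forall x, y <= x -> RInt h y x <= l.
Proof.
  destruct (filterlim_p_infty_nondecreasing (fun x => RInt h y x) y (2 * M * exp (- y / 2))
              RInt_dominated_nondecreasing RInt_dominated_le) as [l [Hlim Hle]].
  exists l; split; [| exact Hle].
  apply is_RInt_gen_p_infty_lim; [| exact Hlim].
  intros b Hb; apply ex_RInt_dominated; lra.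
Qed.

Lemma is_RInt_gen_dominated_pos :
  (forall t, y < t -> 0 < h t) ->
  exists l, is_RInt_gen h (at_point y) (Rbar_locally p_infty) l /\ 0 < l.
Proof.
  intros h_pos.
  destruct is_RInt_gen_dominated as [l [Hl Hle]].
  exists l; split; [exact Hl |].
  apply Rlt_le_trans with (RInt h y (y + 1)); [| apply Hle; lra].
  apply RInt_gt_0; [lra | |].
  - intros t Ht; apply h_pos; lra.
  - intros t Ht; apply h_cont; lra.
Qed.

End ExpDominatedIntegral.

Definition incgamma_integrand (a t : R) : R := Rpower t (a - 1) * exp (- t).

Lemma incgamma_integrand_pos (a t : R) : 0 < incgamma_integrand a t.
Proof. apply Rmult_lt_0_compat; apply exp_pos. Qed.

Lemma continuous_incgamma_integrand (a t : R) : 0 < t -> continuous (incgamma_integrand a) t.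
Proof.
  intros Ht; apply (ex_derive_continuous (incgamma_integrand a)).
  unfold incgamma_integrand, Rpower; auto_derive; auto.
Qed.

Lemma incgamma_integrand_succ (a t : R) : 0 < t ->
  incgamma_integrand (a + 1) t = t * incgamma_integrand a t.
Proof.
  intros Ht; unfold incgamma_integrand.
  replace (a + 1 - 1) with (1 + (a - 1)) by ring.
  rewrite Rpower_plus, Rpower_1 by exact Ht; ring.
Qed.

(* From ln u <= u - 1 at u = t / (2c) when c > 0; trivial when c <= 0. *)
Lemma scaled_ln_le_half (c y : R) : 0 < y ->
  exists K, forall t, y <= t -> c * ln t <= K + t / 2.
Proof.
  intros Hy; destruct (Rle_or_lt c 0) as [Hc | Hc].
  - exists (c * ln y); intros t Ht.
    pose proof (ln_le y t Hy Ht); nra.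
  - exists (c * (ln (2 * c) - 1)); intros t Ht.
    pose proof (exp_ineq1_le (ln (t / (2 * c)))) as Hln.
    rewrite exp_ln in Hln by (apply Rdiv_lt_0_compat; lra).
    unfold Rdiv in Hln; rewrite ln_mult, ln_Rinv in Hln by
      (try apply Rinv_0_lt_compat; lra).
    assert (c * (1 + (ln t + - ln (2 * c))) <= c * (t * / (2 * c)))
      by (apply Rmult_le_compat_l; lra).
    replace (c * (t * / (2 * c))) with (t / 2) in * by (field; lra).
    lra.
Qed.

Lemma incgamma_integrand_le_exp_half (a y : R) : 0 < y ->
  exists M, forall t, y <= t -> incgamma_integrand a t <= M * exp (- t / 2).
Proof.
  intros Hy; destruct (scaled_ln_le_half (a - 1) y Hy) as [K HK].
  exists (exp K); intros t Ht; unfold incgamma_integrand, Rpower.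
  rewrite <- !exp_plus.
  destruct (Rle_lt_or_eq_dec _ _ (HK t Ht)) as [Hlt | Heq].
  - left; apply exp_increasing; lra.
  - right; f_equal; lra.
Qed.

Lemma upper_inc_gamma_spec (a y : R) : 0 < y ->
  is_RInt_gen (incgamma_integrand a) (at_point y) (Rbar_locally p_infty) (upper_inc_gamma a y)
  /\ 0 < upper_inc_gamma a y.
Proof.
  intros Hy; destruct (incgamma_integrand_le_exp_half a y Hy) as [M HM].
  destruct (is_RInt_gen_dominated_pos (incgamma_integrand a) y M) as [l [Hl Hpos]].
  - intros t Ht; apply continuous_incgamma_integrand; lra.
  - intros t _; left; apply incgamma_integrand_pos.
  - exact HM.
  - intros t _; apply incgamma_integrand_pos.
  - unfold upper_inc_gamma; fold (incgamma_integrand a).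
    rewrite (RInt_gen_p_infty_unique _ _ _ Hl); auto.
Qed.

Lemma upper_inc_gamma_gap_pos (a y : R) : 0 < y ->
  0 < upper_inc_gamma a y - y * upper_inc_gamma (a - 1) y.
Proof.
  intros Hy.
  set (d := fun t => incgamma_integrand a t - y * incgamma_integrand (a - 1) t).
  assert (d_factor : forall t, 0 < t -> d t = (t - y) * incgamma_integrand (a - 1) t).
  { intros t Ht; unfold d.
    replace a with (a - 1 + 1) at 1 by ring.
    rewrite incgamma_integrand_succ by exact Ht; ring. }
  destruct (upper_inc_gamma_spec a y Hy) as [HA _].
  destruct (upper_inc_gamma_spec (a - 1) y Hy) as [HB _].
  destruct (incgamma_integrand_le_exp_half a y Hy) as [M HM].
  destruct (is_RInt_gen_dominated_pos d y M) as [l [Hl Hpos]].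
  - intros t Ht; apply (ex_derive_continuous d).
    unfold d, incgamma_integrand, Rpower; auto_derive; lra.
  - intros t Ht; rewrite d_factor by lra.
    pose proof (incgamma_integrand_pos (a - 1) t); nra.
  - intros t Ht; unfold d.
    pose proof (incgamma_integrand_pos (a - 1) t); pose proof (HM t Ht); nra.
  - intros t Ht; rewrite d_factor by lra.
    pose proof (incgamma_integrand_pos (a - 1) t); nra.
  - assert (Hd : is_RInt_gen d (at_point y) (Rbar_locally p_infty)
                   (minus (upper_inc_gamma a y) (scal y (upper_inc_gamma (a - 1) y)))).
    { apply (@is_RInt_gen_minus R_NormedModule); try apply filter_filter; [exact HA |].
      apply (@is_RInt_gen_scal R_NormedModule); try apply filter_filter; exact HB. }
    replace (upper_inc_gamma a y - y * upper_inc_gamma (a - 1) y) with l; [exact Hpos |].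
    rewrite <- (RInt_gen_p_infty_unique _ _ _ Hl).
    exact (RInt_gen_p_infty_unique _ _ _ Hd).
Qed.

Theorem proposition5 (a y : R) (hy : 0 < y) :
  upper_inc_gamma a y / upper_inc_gamma (a - 1) y > y.
Proof.
  destruct (upper_inc_gamma_spec (a - 1) y hy) as [_ Hpos].
  pose proof (upper_inc_gamma_gap_pos a y hy).
  apply Rlt_div_r; [exact Hpos | lra].
Qed.
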